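(* Let $X$ be a topological space. The following are equivalent: (1) $X$ is hereditarily Baire; (2) every fragmentable function $f\colon X\to\mathbb R$ has (PCP). Moreover, if $X$ is perfectly normal, (1) and (2) are equivalent to: (3) every function $f\colon X\to\mathbb R$ with the Lebesgue property has (PCP).
   Context: A topological space is Baire if every nonempty open subset of it is nonmeager in it; it is hereditarily Baire if every nonempty closed subspace is Baire. For $f\colon X\to\mathbb R$: $f$ is fragmentable if for every $\varepsilon>0$ and every nonempty closed $F\subseteq X$ there is an open $U$ with $U\cap F\neq\emptyset$ and $\operatorname{diam} f(U\cap F)<\varepsilon$; $f$ has (PCP) if for every nonempty closed $F\subseteq X$ the restriction $f|_F$ has a point of continuity; $f$ has the Lebesgue property if for every $\varepsilon>0$ there are closed sets $X_n$ ($n\in\mathbb N$) with $X=\bigcup_n X_n$ and $\operatorname{diam} f(X_n)\le\varepsilon$ for all $n$. *)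

From HB Require Import structures.
From mathcomp Require Import all_boot all_order all_algebra.
From mathcomp Require Import all_classical all_reals all_analysis.
From mathcomp Require Import borel_hierarchy.
Set Implicit Arguments. Unset Strict Implicit. Unset Printing Implicit Defensive.
Import Order.TTheory GRing.Theory Num.Theory.
Import numFieldNormedType.Exports.
Local Open Scope classical_set_scope.
Local Open Scope ring_scope.

Section Relative.
Context {T : topologicalType}.

Definition rel_open (F U : set T) := exists2 V : set T, open V & U = V `&` F.

Definition rel_closure (F A : set T) := closure A `&` F.

Definition rel_nowhere_dense (F A : set T) :=
  A `<=` F /\
  forall U, rel_open F U -> U !=set0 -> ~ (U `<=` rel_closure F A).

Definition rel_meager (F A : set T) :=
  exists2 N : (set T)^nat, (forall n, rel_nowhere_dense F (N n)) &
    A `<=` \bigcup_n N n.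

Definition Baire_on (F : set T) :=
  forall U, rel_open F U -> U !=set0 -> ~ rel_meager F U.

Definition hereditarily_Baire :=
  forall F : set T, closed F -> F !=set0 -> Baire_on F.

Definition perfectly_normal :=
  normal_space T /\ forall A : set T, closed A -> Gdelta A.
End Relative.

Section Functions.
Context {R : realType} {T : topologicalType}.

Definition diam_lt (S : set R) (eps : R) :=
  exists2 d : R, d < eps & forall x y, S x -> S y -> `|x - y| <= d.

Definition diam_le (S : set R) (eps : R) :=
  forall x y, S x -> S y -> `|x - y| <= eps.

Definition fragmentable (f : T -> R) :=
  forall eps : R, 0 < eps -> forall F : set T, closed F -> F !=set0 ->
    exists U : set T, [/\ open U, (U `&` F) !=set0 & diam_lt (f @` (U `&` F)) eps].

Definition PCP (f : T -> R) :=
  forall F : set T, closed F -> F !=set0 ->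
    exists2 x, F x & f @ within F (nbhs x) --> f x.

Definition Lebesgue_property (f : T -> R) :=
  forall eps : R, 0 < eps ->
    exists X_ : (set T)^nat, [/\ forall n, closed (X_ n),
      \bigcup_n X_ n = setT & forall n, diam_le (f @` X_ n) eps].
End Functions.

From HB Require Import structures.
From mathcomp Require Import all_boot all_order all_algebra.
From mathcomp Require Import all_classical all_reals all_analysis.
From mathcomp Require Import borel_hierarchy.
From mathcomp Require Import lra.

(* For a fragmentable f and a closed F, the points of F with a neighbourhood on
   which f|F oscillates by less than 1/(n+1) form sets whose complements are
   nowhere dense in F; when F is Baire some point lies in all of them, and it is
   a continuity point of f|F.  In a hereditarily Baire space the Lebesgue
   property implies fragmentability (a closed set is not covered by countably
   many nowhere dense pieces), so it implies (PCP) too.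
   Conversely, if X is not hereditarily Baire, some nonempty closed E is covered
   by closed sets D_n with empty interior in E.  The function taking the value
   1/(n+1) on D_n minus the earlier D_k, and 0 off all D_n, is fragmentable but
   discontinuous at every point of E relative to E; when closed sets are G_delta
   the sets D_n minus the earlier D_k are F_sigma, which gives it the Lebesgue
   property. *)

Set Implicit Arguments. Unset Strict Implicit. Unset Printing Implicit Defensive.
Import Order.TTheory GRing.Theory Num.Theory.
Import numFieldNormedType.Exports.
Local Open Scope classical_set_scope.
Local Open Scope ring_scope.

Lemma exists_natSinv_lt (R : realType) (e : R) : 0 < e -> exists N : nat, N.+1%:R^-1 < e.
Proof.
move=> e0; have [N _ H] := near_infty_natSinv_lt (PosNum e0).
by exists N; exact: (H N (leqnn N)).
Qed.

Lemma natSinv_gt0 (R : realType) (n : nat) : 0 < n.+1%:R^-1 :> R.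
Proof. by rewrite invr_gt0. Qed.

Lemma diam_leS (R : realType) (S S' : set R) (e e' : R) :
  S' `<=` S -> e <= e' -> diam_le S e -> diam_le S' e'.
Proof. by move=> S'S ee' dS x y /S'S Sx /S'S Sy; exact: le_trans (dS x y Sx Sy) ee'. Qed.

Section Baire.
Context {T : topologicalType}.

Lemma rel_open_self (F : set T) : rel_open F F.
Proof. by exists setT; [exact: openT | rewrite setTI]. Qed.

Lemma Baire_on_avoid_meager (F : set T) (N : (set T)^nat) :
  Baire_on F -> F !=set0 -> (forall n, rel_nowhere_dense F (N n)) ->
  exists2 x, F x & forall n, ~ N n x.
Proof.
move=> bF F0 ndN; apply: contrapT => noX.
apply: (bF F (rel_open_self F) F0); exists N => // x Fx.
by apply: contrapT => nNx; apply: noX; exists x => // n Nnx; apply: nNx; exists n.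
Qed.

Lemma not_rel_nowhere_dense (F A : set T) : A `<=` F -> ~ rel_nowhere_dense F A ->
  exists V : set T, [/\ open V, V `&` F !=set0 & V `&` F `<=` closure A].
Proof.
move=> AF /not_andP[//|/existsNP[U /not_implyP[[V oV ->] /not_implyP[VF0 /contrapT VFA]]]].
by exists V; split=> // x /VFA[].
Qed.

End Baire.

Lemma Gdelta_setC_Fsigma {T : topologicalType} (A : set T) : Gdelta A -> Fsigma (~` A).
Proof.
move=> [F oF ->]; exists (fun i => ~` F i); last by rewrite setC_bigcap.
by move=> i; rewrite closedC.
Qed.

Lemma Lebesgue_property_countable_cover {R : realType} {T : topologicalType}
    (I : countType) (f : T -> R) :
  (forall eps, 0 < eps -> exists Y : I -> set T,
     [/\ forall i, closed (Y i), \bigcup_i Y i = setT & forall i, diam_le (f @` Y i) eps]) ->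
  Lebesgue_property f.
Proof.
move=> cover eps eps0; have [Y [cY covY dY]] := cover eps eps0.
exists (fun n => if unpickle n is Some i then Y i else set0); split.
- by move=> n; case: unpickle => [i|]; [exact: cY | exact: closed0].
- apply/seteqP; split => // x _; have : [set: T] x by [].
  by rewrite -covY => -[i _ Yix]; exists (pickle i) => //; rewrite pickleK.
- by move=> n; case: unpickle => [i|]; [exact: dY | move=> ? ? [? []]].
Qed.

Section Oscillation.
Context {R : realType} {T : topologicalType}.
Implicit Types (f : T -> R) (F : set T).

Definition small_oscillation f F (eps : R) : set T :=
  [set x | exists U, [/\ open U, U x & diam_lt (f @` (U `&` F)) eps]].

Lemma fragmentable_rel_nowhere_dense f F eps : fragmentable f -> 0 < eps ->
  rel_nowhere_dense F (F `&` ~` small_oscillation f F eps).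
Proof.
move=> frag eps0; split=> [x []//|_ [V oV ->] [y [Vy Fy]] VFsub].
have clVF0 : closure (V `&` F) !=set0 by exists y; apply: subset_closure.
have [U [oU [z [Uz clVFz]] [d deps dU]]] :=
  frag eps eps0 _ (@closed_closure _ _) clVF0.
have [w [[Vw Fw] Uw]] := clVFz U (open_nbhs_nbhs (conj oU Uz)).
have [clw _] := VFsub w (conj Vw Fw).
have [v [[Fv nosc] [Uv Vv]]] :=
  clw (U `&` V) (open_nbhs_nbhs (conj (openI oU oV) (conj Uw Vw))).
apply: nosc; exists (U `&` V); split => //; first exact: openI.
exists d => // a b [p [[Up Vp] Fp] <-] [q [[Uq Vq] Fq] <-].
by apply: dU; [exists p | exists q] => //; split => //; apply: subset_closure.
Qed.

Lemma small_oscillation_cvg f F x : F x ->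
  (forall n, small_oscillation f F n.+1%:R^-1 x) -> f @ within F (nbhs x) --> f x.
Proof.
move=> Fx osc; apply/cvgrPdist_lt => e e0.
have [n ne] := exists_natSinv_lt e0.
have [U [oU Ux [d dn dU]]] := osc n.
rewrite near_withinE; apply: filterS (open_nbhs_nbhs (conj oU Ux)) => t Ut Ft.
apply: le_lt_trans (lt_trans dn ne).
by apply: dU; [exists x | exists t].
Qed.

Lemma hereditarily_Baire_fragmentable_PCP :
  @hereditarily_Baire T -> forall f, fragmentable f -> PCP f.
Proof.
move=> hB f frag F cF F0.
have ndN (n : nat) := fragmentable_rel_nowhere_dense F frag (natSinv_gt0 R n).
have [x Fx osc] := Baire_on_avoid_meager (hB F cF F0) F0 ndN.
exists x => //; apply: small_oscillation_cvg => // n.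
by apply: contrapT => nosc; apply: (osc n).
Qed.

Lemma hereditarily_Baire_Lebesgue_fragmentable :
  @hereditarily_Baire T -> forall f, Lebesgue_property f -> fragmentable f.
Proof.
move=> hB f Leb e e0 K cK K0.
have [X_ [cX covX dX]] := Leb (e / 2) (divr_gt0 e0 (ltr0Sn R 1)).
have [n ndn] : exists n, ~ rel_nowhere_dense K (K `&` X_ n).
  apply/existsNP => ndX.
  have [x Kx nX] := Baire_on_avoid_meager (hB K cK K0) K0 ndX.
  have : [set: T] x by [].
  by rewrite -covX => -[m _ Xmx]; apply: (nX m).
have [V [oV VK0 VKcl]] := not_rel_nowhere_dense (@subIsetl _ K (X_ n)) ndn.
have VKX : V `&` K `<=` X_ n.
  move=> x /VKcl clx; rewrite (closure_id (X_ n)).1 //.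
  exact: closureS (@subIsetr _ K (X_ n)) _ clx.
exists V; split => //; exists (e / 2); first by rewrite ltr_pdivrMr // ltr_pMr // ltr1n.
exact: diam_leS (image_subset f VKX) (lexx _) (dX n).
Qed.

End Oscillation.

Section NonBaire.
Context {T : topologicalType}.

Definition non_Baire_witness (E : set T) (D : (set T)^nat) :=
  [/\ closed E, E !=set0, forall n, closed (D n), E `<=` \bigcup_n D n &
      forall n W, open W -> W `&` E !=set0 -> exists y, [/\ W y, E y & ~ D n y]].

Lemma not_hereditarily_Baire_witness :
  ~ @hereditarily_Baire T -> exists E D, non_Baire_witness E D.
Proof.
move=> /existsNP[F /not_implyP[cF /not_implyP[F0 /existsNP[U]]]].
move=> /not_implyP[[V oV UE] /not_implyP[U0 /contrapT[N ndN UN]]].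
have UF : U `<=` F by rewrite UE; exact: subIsetr.
have UV : U `<=` V by rewrite UE; exact: subIsetl.
have meetU W : open W -> W `&` closure U !=set0 -> W `&` U !=set0.
  move=> oW [x [Wx clUx]]; have [y [Uy Wy]] := clUx W (open_nbhs_nbhs (conj oW Wx)).
  by exists y.
exists (closure U), (fun n => if n is m.+1 then closure (N m) `&` closure U
                               else closure U `&` ~` V); split.
- exact: closed_closure.
- by have [x Ux] := U0; exists x; exact: subset_closure.
- by case=> [|n]; apply: closedI; rewrite ?closedC //; exact: closed_closure.
- move=> x clUx; have [Vx|nVx] := pselect (V x); last by exists 0%N.
  have Ux : U x.
    rewrite UE; split => //; rewrite (closure_id F).1 //; exact: closureS UF _ clUx.
  by have [n _ Nx] := UN x Ux; exists n.+1 => //; split => //; exact: subset_closure.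
- move=> [|n] W oW WE; have [y [Wy Uy]] := meetU W oW WE.
    exists y; split => //; first exact: subset_closure.
    by move=> [_ nVy]; exact: nVy (UV _ Uy).
  apply: contrapT => noy; have [_ ndNn] := ndN n.
  apply: (ndNn (W `&` U)); first by exists (W `&` V); [exact: openI | rewrite UE setIA].
    by exists y.
  move=> z [Wz Uz]; split; last exact: UF.
  apply: contrapT => nclNz; apply: noy; exists z; split => //; first exact: subset_closure.
  by case.
Qed.

End NonBaire.

Section FirstHitLevel.
Context {R : realType} {T : topologicalType} (D : (set T)^nat).

Definition hit_before (n : nat) : set T := \bigcup_(k in `I_n) D k.

Definition first_hit_level (x : T) : R :=
  if pselect (exists n, `[< D n x >]) is left ex then (ex_minn ex).+1%:R^-1 else 0.

Lemma hit_before0 : hit_before 0 = set0.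
Proof. by rewrite /hit_before II0 bigcup_set0. Qed.

Lemma hit_beforeS n : hit_before n.+1 = hit_before n `|` D n.
Proof. by rewrite /hit_before IIS bigcup_setU bigcup_set1. Qed.

Lemma closed_hit_before n : (forall k, closed (D k)) -> closed (hit_before n).
Proof. by move=> cD; apply: closed_bigcup => [|k _]; [exact: finite_II | exact: cD]. Qed.

Lemma first_hit_levelP x :
  ((forall n, ~ D n x) /\ first_hit_level x = 0) \/
  exists n, [/\ D n x, ~ hit_before n x & first_hit_level x = n.+1%:R^-1].
Proof.
rewrite /first_hit_level; case: pselect => [ex|nex]; last first.
  by left; split => // n Dnx; apply: nex; exists n; exact/asboolP.
right; case: ex_minnP => m /asboolP Dmx minm; exists m; split => // -[k /= km Dkx].
by have := minm k (asboolT Dkx); rewrite leqNgt km.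
Qed.

Lemma first_hit_unique x m n : D m x -> ~ hit_before m x -> D n x -> ~ hit_before n x ->
  m = n.
Proof.
move=> Dm nhm Dn nhn; case: (ltngtP m n) => // [mn|nm].
  by case: nhn; exists m.
by case: nhm; exists n.
Qed.

Lemma first_hit_levelE x n : D n x -> ~ hit_before n x -> first_hit_level x = n.+1%:R^-1.
Proof.
move=> Dn nhn; case: (first_hit_levelP x) => [[nD _]|[m [Dm nhm ->]]].
  by case: (nD n).
by rewrite (first_hit_unique Dm nhm Dn nhn).
Qed.

Lemma first_hit_level_bound x N : ~ hit_before N x -> 0 <= first_hit_level x <= N.+1%:R^-1.
Proof.
move=> nhN; case: (first_hit_levelP x) => [[_ ->]|[m [Dm _ ->]]].
  by rewrite lexx invr_ge0 ler0n.
have Nm : (N <= m)%N by rewrite leqNgt; apply/negP => mN; apply: nhN; exists m.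
by rewrite invr_ge0 ler0n /= lef_pV2 ?posrE ?ltr0n // ler_nat ltnS.
Qed.

Lemma first_hit_level_diam_setC N :
  diam_le (first_hit_level @` ~` hit_before N) N.+1%:R^-1.
Proof.
move=> _ _ [x nhx <-] [y nhy <-].
have /andP[x0 xN] := first_hit_level_bound nhx.
have /andP[y0 yN] := first_hit_level_bound nhy.
move: x0 xN y0 yN; set d := N.+1%:R^-1 => x0 xN y0 yN.
by rewrite ler_norml; apply/andP; split; lra.
Qed.

Lemma first_hit_level_diam_setD n : diam_le (first_hit_level @` (D n `\` hit_before n)) 0.
Proof.
move=> _ _ [x [Dx nhx] <-] [y [Dy nhy] <-].
by rewrite (first_hit_levelE Dx nhx) (first_hit_levelE Dy nhy) subrr normr0.
Qed.

Lemma hit_before_jump (K : set T) N : K !=set0 -> K `<=` hit_before N ->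
  exists m, K `&` ~` hit_before m !=set0 /\ K `<=` hit_before m.+1.
Proof.
move=> K0; elim: N => [|N IH] KN; first by have [x /KN] := K0; rewrite hit_before0.
have [KnhN|noK] := pselect (K `&` ~` hit_before N !=set0); first by exists N.
by apply: IH => x Kx; apply: contrapT => nhx; apply: noK; exists x.
Qed.

Lemma first_hit_level_fragmentable : (forall n, closed (D n)) -> fragmentable first_hit_level.
Proof.
move=> cD e e0 K cK K0; have [N Ne] := exists_natSinv_lt e0.
(* Either K leaves hit_before N, where the level is at most 1/(N+1), or K has a
   last layer D m, on which the level is constant. *)
have [[x [Kx nhx]]|KN] := pselect (K `&` ~` hit_before N !=set0).
  exists (~` hit_before N); split; [by rewrite openC; exact: closed_hit_before | by exists x |].
  exists N.+1%:R^-1 => //.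
  exact: diam_leS (image_subset _ (@subIsetl _ _ K)) (lexx _)
    (first_hit_level_diam_setC (N := N)).
have [|m [[x [Kx nhx]] Km]] := hit_before_jump (N := N) K0.
  by move=> y Ky; apply: contrapT => nhy; apply: KN; exists y.
exists (~` hit_before m); split; [by rewrite openC; exact: closed_hit_before | by exists x |].
have sub : ~` hit_before m `&` K `<=` D m `\` hit_before m.
  by move=> y [nhy /Km]; rewrite hit_beforeS => -[//|Dy].
exists 0 => //.
exact: diam_leS (image_subset _ sub) (lexx _) (first_hit_level_diam_setD (n := m)).
Qed.

Lemma first_hit_level_Lebesgue_property :
  (forall n, closed (D n)) -> @perfectly_normal T -> Lebesgue_property first_hit_level.
Proof.
move=> cD [_ Gdelta_closed].
have /choice[C CP] k : exists C : (set T)^nat,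
    (forall i, closed (C i)) /\ ~` hit_before k = \bigcup_i C i.
  have [C cC eqC] :=
    Gdelta_setC_Fsigma (Gdelta_closed _ (closed_hit_before (n := k) cD)).
  by exists C.
apply: (@Lebesgue_property_countable_cover _ _ ((nat * nat) + nat)%type) => e e0.
have [N Ne] := exists_natSinv_lt e0.
exists (fun i => match i with inl (k, j) => D k `&` C k j | inr j => C N j end); split.
- by case=> [[k j]|j]; [apply: closedI => //; exact: (CP k).1 | exact: (CP N).1].
- apply/seteqP; split => // x _.
  have [[nD _]|[n [Dnx nhn _]]] := first_hit_levelP x.
    have : (~` hit_before N) x by move=> [k _ Dkx]; exact: nD Dkx.
    by rewrite (CP N).2 => -[j _ Cj]; exists (inr j).
  have : (~` hit_before n) x := nhn.
  by rewrite (CP n).2 => -[j _ Cj]; exists (inl (n, j)).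
- case=> [[k j]|j].
    have sub : D k `&` C k j `<=` D k `\` hit_before k.
      move=> y [Dy Cy]; split => //.
      by have : (~` hit_before k) y by rewrite (CP k).2; exists j.
    exact: diam_leS (image_subset _ sub) (ltW e0) (first_hit_level_diam_setD (n := k)).
  have sub : C N j `<=` ~` hit_before N by rewrite (CP N).2; exact: bigcup_sup.
  exact: diam_leS (image_subset _ sub) (ltW Ne) (first_hit_level_diam_setC (N := N)).
Qed.

Section OnNonBaireWitness.
Variable E : set T.
Hypothesis wED : non_Baire_witness E D.

Lemma non_Baire_witness_avoid_hit_before N W : open W -> W `&` E !=set0 ->
  exists y, [/\ W y, E y & ~ hit_before N y].
Proof.
have [_ _ cD _ avoidD] := wED.
elim: N W => [|N IH] W oW WE.
  by have [y [Wy Ey]] := WE; exists y; split => //; rewrite hit_before0.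
have [y0 [Wy0 Ey0 nDy0]] := avoidD N W oW WE.
have oWD : open (W `&` ~` D N) by apply: openI => //; rewrite openC.
have [|y [[Wy nDy] Ey nhy]] := IH _ oWD; first by exists y0.
by exists y; split => //; rewrite hit_beforeS => -[].
Qed.

Lemma first_hit_level_discontinuous x : E x ->
  ~ first_hit_level @ within E (nbhs x) --> first_hit_level x.
Proof.
move=> Ex; have [_ _ _ ED _] := wED.
have [[nD _]|[n [_ _ ->]]] := first_hit_levelP x.
  by have [n _ Dnx] := ED x Ex; case: (nD n).
move=> /cvgrPdist_lt cvgx.
pose d : R := n.+1%:R^-1 - n.+2%:R^-1.
have d0 : 0 < d by rewrite subr_gt0 ltf_pV2 ?posrE ?ltr0n // ltr_nat.
have := cvgx d d0; rewrite near_withinE nbhsE => -[W [oW Wx] Wnear].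
have [y [Wy Ey nhy]] :=
  non_Baire_witness_avoid_hit_before n.+1 oW (ex_intro _ x (conj Wx Ex)).
have /andP[_ yn] := first_hit_level_bound nhy.
have := Wnear y Wy Ey; rewrite /= ltNge => /negP; apply.
by apply: le_trans (ler_norm _); rewrite /d lerD2l lerN2.
Qed.

Lemma first_hit_level_not_PCP : ~ PCP first_hit_level.
Proof.
have [cE E0 _ _ _] := wED.
by move=> /(_ E cE E0)[x Ex]; exact: first_hit_level_discontinuous.
Qed.

End OnNonBaireWitness.

End FirstHitLevel.

Theorem proposition2p9 (R : realType) (X : topologicalType) :
  (@hereditarily_Baire X <-> forall f : X -> R, fragmentable f -> PCP f) /\
  (@perfectly_normal X ->
     (@hereditarily_Baire X <-> forall f : X -> R, Lebesgue_property f -> PCP f)).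
Proof.
split.
  split; first exact: hereditarily_Baire_fragmentable_PCP.
  move=> fragmentable_PCP; apply: contrapT => /not_hereditarily_Baire_witness[E [D wED]].
  have [_ _ cD _ _] := wED.
  exact: first_hit_level_not_PCP wED (fragmentable_PCP _ (first_hit_level_fragmentable cD)).
move=> pnX; split => [hB f /(hereditarily_Baire_Lebesgue_fragmentable hB)|Lebesgue_PCP].
  exact: hereditarily_Baire_fragmentable_PCP.
apply: contrapT => /not_hereditarily_Baire_witness[E [D wED]].
have [_ _ cD _ _] := wED.
exact: first_hit_level_not_PCP wED (Lebesgue_PCP _ (first_hit_level_Lebesgue_property cD pnX)).
Qed.
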